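(* Let $X$ be a finite-dimensional simplicial complex such that for all vertices $x,y$ of $X$, $\Sigma_x\subseteq\Sigma_y$ implies $x=y$. Then the map $\Omega\colon\mathrm{Aut}(X)\to\mathrm{Aut}(\mathcal{N}(X))$, $\Omega(\varphi)=\varphi_*$, is injective.
   Context: For a vertex $x$ of $X$, $\Sigma_x$ is the collection of maximal simplices of $X$ containing $x$. $\mathcal{N}(X)$ is the nerve of the collection of maximal simplices of $X$ (vertices: maximal simplices of $X$; a finite set of them is a simplex iff their common intersection is non-empty). For $\varphi\in\mathrm{Aut}(X)$ (simplicial automorphisms), $\varphi_*$ is the simplicial automorphism of $\mathcal{N}(X)$ given on vertices by $\varphi_*(K)=\varphi(K)$. *)

From mathcomp Require Import all_boot.
From mathcomp Require Import boolp classical_sets cardinality.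
Set Implicit Arguments. Unset Strict Implicit. Unset Printing Implicit Defensive.
Local Open Scope classical_set_scope.

Record complex (V : Type) := Complex {
  simplex : set (set V);
  simplex_finite : forall s, simplex s -> finite_set s;
  simplex_nonempty : forall s, simplex s -> s !=set0;
  simplex_down : forall s t, simplex s -> t `<=` s -> t !=set0 -> simplex t;
  simplex_vertex : forall v : V, simplex [set v]
}.

Definition finite_dim V (X : complex V) : Prop :=
  exists n : nat, forall s, simplex X s -> exists f : 'I_n -> V, s `<=` range f.

Definition maximal V (X : complex V) (K : set V) : Prop :=
  simplex X K /\ forall L, simplex X L -> K `<=` L -> L = K.

Definition Sigma V (X : complex V) (x : V) : set (set V) :=
  [set K | maximal X K /\ K x].

Definition is_aut V (X : complex V) (phi : V -> V) : Prop :=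
  bijective phi /\ forall s, simplex X s <-> simplex X (phi @` s).

(* the nerve N(X): vertices are maximal simplices of X, a finite nonempty
   family of them is a simplex iff their common intersection is nonempty *)
Definition nerve_vertex V (X : complex V) := {K : set V | maximal X K}.

Definition star V (phi : V -> V) (K : set V) : set V := phi @` K.

From mathcomp Require Import all_boot.
From mathcomp Require Import boolp classical_sets cardinality.
Set Implicit Arguments. Unset Strict Implicit. Unset Printing Implicit Defensive.
Local Open Scope classical_set_scope.

(* An automorphism permutes the maximal simplices, so every maximal simplex
   through phi x is phi K for a maximal K through x; then phi K = psi K also
   contains psi x.  Hence Sigma (phi x) is contained in Sigma (psi x), and the
   separation hypothesis gives phi x = psi x. *)

Lemma image_cancel (T U : Type) (f : T -> U) (g : U -> T) (A : set U) :
  cancel g f -> f @` (g @` A) = A.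
Proof. by move=> gK; rewrite image_comp; apply: eq_image_id => y _; exact: gK. Qed.

Section Automorphisms.

Variables (V : Type) (X : complex V).

Lemma is_aut_inv (phi g : V -> V) :
  is_aut X phi -> cancel phi g -> cancel g phi -> is_aut X g.
Proof.
move=> [_ Hphi] phiK gK; split; first by exists phi.
by move=> s; rewrite (Hphi (g @` s)) image_cancel.
Qed.

Lemma maximal_aut_image (phi g : V -> V) (K : set V) :
  is_aut X phi -> cancel phi g -> cancel g phi ->
  maximal X K -> maximal X (phi @` K).
Proof.
move=> aut_phi phiK gK [sK maxK].
have [_ Hg] := is_aut_inv aut_phi phiK gK.
split; first exact: (aut_phi.2 K).1 sK.
move=> L sL KL.
have gLK : g @` L = K.
  apply: maxK; first exact/(Hg L).
  by rewrite -[X in X `<=` _](image_cancel K phiK); exact: image_subset.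
by rewrite -gLK image_cancel.
Qed.

Lemma Sigma_aut_subset (phi psi : V -> V) (x : V) :
  is_aut X phi -> (forall K, maximal X K -> star phi K = star psi K) ->
  Sigma X (phi x) `<=` Sigma X (psi x).
Proof.
move=> aut_phi eq_star K' [maxK' K'phix]; split=> //.
have [[g phiK gK] _] := aut_phi.
pose K := g @` K'.
have phiK' : phi @` K = K' by exact: image_cancel.
have maxK : maximal X K.
  exact: maximal_aut_image (is_aut_inv aut_phi phiK gK) gK phiK maxK'.
have Kx : K x by rewrite -[x]phiK; exact: imageP K'phix.
by rewrite -phiK' -/(star phi K) eq_star //; exact: imageP Kx.
Qed.

End Automorphisms.

Theorem proposition3p8 (V : Type) (X : complex V) :
  finite_dim X ->
  (forall x y : V, Sigma X x `<=` Sigma X y -> x = y) ->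
  forall phi psi : V -> V, is_aut X phi -> is_aut X psi ->
  (forall K, maximal X K -> star phi K = star psi K) ->
  phi = psi.
Proof.
move=> _ Sigma_sep phi psi aut_phi _ eq_star.
apply: funext => x; apply: Sigma_sep.
exact: Sigma_aut_subset aut_phi eq_star.
Qed.
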